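(* Let $\mathsf{A}\subset GL_2(\mathbb{R})$ with $\mathscr{R}(\mathsf{A})\neq\emptyset$ be such that $\mathcal{S}(\mathsf{A})$ is almost multiplicative. Let $X_u=\{A\mathbb{R}^2 : A\in\mathscr{R}(\mathsf{A})\}\subset\mathbb{RP}^1$ and $X_s=\{\ker A : A\in\mathscr{R}(\mathsf{A})\}\subset\mathbb{RP}^1$. Then $X_u$ and $X_s$ are nonempty, compact, and disjoint. Furthermore, for every nonzero $A\in\mathscr{S}(\mathsf{A})$ and every $V\in X_u$, $AV$ is a line and $AV\in X_u$.
   Context: $\|\cdot\|$ is the operator norm; $\mathbb{RP}^1$ is the real projective line (lines through the origin of $\mathbb{R}^2$). $\mathcal{S}(\mathsf{A})$ is the semigroup of finite products of elements of $\mathsf{A}$; $\mathscr{S}(\mathsf{A})=\overline{\mathbb{R}\mathcal{S}(\mathsf{A})}\subset M_2(\mathbb{R})$; $\mathscr{R}(\mathsf{A})=\{A\in\mathscr{S}(\mathsf{A}):\operatorname{rank}(A)=1\}$. A semigroup $\mathcal{S}$ is almost multiplicative if there is $\kappa>0$ with $\|AB\|\ge\kappa\|A\|\|B\|$ for all $A,B\in\mathcal{S}$. *)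

From HB Require Import structures.
From mathcomp Require Import all_boot all_order all_algebra.
From mathcomp Require Import all_classical all_reals all_analysis.
Set Implicit Arguments. Unset Strict Implicit. Unset Printing Implicit Defensive.
Import Order.TTheory GRing.Theory Num.Theory.
Import numFieldNormedType.Exports.
Local Open Scope classical_set_scope.
Local Open Scope ring_scope.

Section Defs.
Variable R : realType.

Definition eucl (x : 'cV[R]_2) : R := Num.sqrt (\sum_i (x i 0) ^+ 2).

Definition opnorm (A : 'M[R]_2) : R :=
  sup [set eucl (A *m x) | x in [set x : 'cV[R]_2 | eucl x = 1]].

Inductive semigroup_gen (A : set 'M[R]_2) : 'M[R]_2 -> Prop :=
| sg_base M : A M -> semigroup_gen A M
| sg_mul M N : semigroup_gen A M -> semigroup_gen A N -> semigroup_gen A (M *m N).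

Definition almost_multiplicative (S : set 'M[R]_2) : Prop :=
  exists2 kappa : R, 0 < kappa &
    forall M N, S M -> S N -> opnorm (M *m N) >= kappa * opnorm M * opnorm N.

Definition scrS (A : set 'M[R]_2) : set 'M[R]_2 :=
  closure [set c *: M | c in [set: R] & M in semigroup_gen A].

Definition scrR (A : set 'M[R]_2) : set 'M[R]_2 :=
  [set M | scrS A M /\ \rank M = 1%N].

(* points of RP^1 are lines through the origin, represented as subsets of R^2 *)
Definition span1 (v : 'cV[R]_2) : set 'cV[R]_2 := [set c *: v | c in [set: R]].
Definition is_line (L : set 'cV[R]_2) : Prop := exists2 v, v != 0 & L = span1 v.

Definition img (M : 'M[R]_2) : set 'cV[R]_2 := [set M *m x | x in [set: 'cV[R]_2]].
Definition kerm (M : 'M[R]_2) : set 'cV[R]_2 := [set x | M *m x = 0].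
Definition mapset (M : 'M[R]_2) (V : set 'cV[R]_2) : set 'cV[R]_2 := [set M *m x | x in V].

(* a set X of points of RP^1 is compact iff its preimage in the unit circle
   (under the quotient map S^1 -> RP^1, v |-> span v) is compact *)
Definition RP1_compact (X : set (set 'cV[R]_2)) : Prop :=
  compact [set v : 'cV[R]_2 | eucl v = 1 /\ X (span1 v)].

Definition Xu (A : set 'M[R]_2) : set (set 'cV[R]_2) := [set img M | M in scrR A].
Definition Xs (A : set 'M[R]_2) : set (set 'cV[R]_2) := [set kerm M | M in scrR A].
End Defs.

(* Almost multiplicativity passes to the closure [scrS A]: the operator norm is
   comparable to the entrywise norm, [k |M| |N| <= |M N|] holds on the scaled
   semigroup by homogeneity, and both sides are continuous in each variable.  So a
   product of nonzero elements of [scrS A] is nonzero.  This gives disjointness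
   (img M = ker N would force N M = 0) and invariance (M P is again of rank one,
   with image M (img P)).  For compactness, the unit vectors spanning points of
   X_u (resp. X_s) are the second components of the pairs (M, v) with M in
   [scrS A], |M| = 1, |v| = 1 and M = v v^T M (resp. M v = 0); these pairs form a
   closed bounded set, whose projection is compact. *)

From HB Require Import structures.
From mathcomp Require Import all_boot all_order all_algebra.
From mathcomp Require Import all_classical all_reals all_analysis.
From mathcomp Require Import ring lra.
Set Implicit Arguments. Unset Strict Implicit. Unset Printing Implicit Defensive.
Import Order.TTheory GRing.Theory Num.Theory.
Import numFieldNormedType.Exports.
Local Open Scope classical_set_scope.
Local Open Scope ring_scope.

Section MatrixNorm.
Variable R : realType.
Implicit Types (m n p : nat).

Lemma mx_entry_le_norm m n (M : 'M[R]_(m, n)) i j : `|M i j| <= `|M|.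
Proof.
rewrite [leRHS]/Num.norm /= mx_normrE; apply/bigmax_geP; right.
by exists (i, j).
Qed.

Lemma mx_norm_le_entries m n (M : 'M[R]_(m, n)) c :
  0 <= c -> (forall i j, `|M i j| <= c) -> `|M| <= c.
Proof.
move=> c0 Mc; rewrite [leLHS]/Num.norm /= mx_normrE.
by apply: bigmax_le => // ij _; exact: Mc.
Qed.

Lemma mx_norm_mulmx m n p (A : 'M[R]_(m, n)) (B : 'M[R]_(n, p)) :
  `|A *m B| <= n%:R * (`|A| * `|B|).
Proof.
apply: mx_norm_le_entries => [|i j]; first by rewrite !mulr_ge0.
rewrite mxE; apply: le_trans (ler_norm_sum _ _ _) _.
rewrite mulr_natl -[n in _ *+ n]card_ord -sumr_const; apply: ler_sum => k _.
by rewrite normrM ler_pM ?mx_entry_le_norm.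
Qed.

End MatrixNorm.

Lemma continuous_id (T : topologicalType) : continuous (@id T).
Proof. by move=> ?; exact: cvg_id. Qed.

Lemma continuous_fst (U V : topologicalType) : continuous (@fst U V).
Proof. by case=> ? ?; exact: cvg_fst. Qed.

Lemma continuous_snd (U V : topologicalType) : continuous (@snd U V).
Proof. by case=> ? ?; exact: cvg_snd. Qed.

Lemma closure_rel (T : topologicalType) (C : set T) (P : T -> T -> Prop) :
  (forall y, closed [set x | P x y]) -> (forall x, closed (P x)) ->
  (forall x y, C x -> C y -> P x y) -> forall x y, closure C x -> closure C y -> P x y.
Proof.
move=> clP1 clP2 CP x y; rewrite closureE => Cx Cy.
have Px y' : C y' -> P x y'.
  by move=> Cy'; apply: smallest_sub (clP1 y') _ _ Cx => x' Cx'; exact: CP.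
exact: smallest_sub (clP2 x) Px _ Cy.
Qed.

Section MatrixTopology.
Variable R : realType.
Implicit Types (T : topologicalType) (m n p : nat).

Lemma continuous_mxP T m n (F : T -> 'M[R]_(m, n)) :
  continuous F <-> forall i j, continuous (fun t => F t i j).
Proof.
split=> [cF i j t|cF t].
  exact: (continuous_comp (cF t) (@coord_continuous R m n i j (F t))).
apply/cvgrPdist_lt => e e0.
have : \forall s \near t, forall ij : 'I_m * 'I_n, `|F t ij.1 ij.2 - F s ij.1 ij.2| < e.
  by apply: filter_forall => -[i j]; exact: (cvgrPdist_lt _ _).1 (cF i j t) e e0.
apply: filterS => s Fs; rewrite [ltLHS]/Num.norm /= mx_normrE.
by apply: bigmax_lt => // ij _; rewrite !mxE; exact: Fs.
Qed.

Lemma continuous_sum T (I : finType) (f : I -> T -> R) :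
  (forall i, continuous (f i)) -> continuous (fun t => \sum_i f i t).
Proof.
move=> cf; rewrite -fct_sumE.
apply: (big_ind (fun g : T -> R => continuous g)) => // [|g h cg ch t].
- exact: cst_continuous.
- exact: continuousD (cg t) (ch t).
Qed.

Lemma continuous_mulmx T m n p (F : T -> 'M[R]_(m, n)) (G : T -> 'M[R]_(n, p)) :
  continuous F -> continuous G -> continuous (fun t => F t *m G t).
Proof.
move=> /continuous_mxP cF /continuous_mxP cG; apply/continuous_mxP => i j.
under eq_fun do rewrite mxE.
apply: continuous_sum => k t; exact: continuousM (cF i k t) (cG k j t).
Qed.

Lemma continuous_trmx T m n (F : T -> 'M[R]_(m, n)) :
  continuous F -> continuous (fun t => (F t)^T).
Proof.
move=> /continuous_mxP cF; apply/continuous_mxP => i j.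
under eq_fun do rewrite mxE; exact: cF.
Qed.

Lemma continuous_mx_norm T m n (F : T -> 'M[R]_(m, n)) :
  continuous F -> continuous (fun t => `|F t|).
Proof.
by move=> cF t; exact: (continuous_comp (cF t) (@norm_continuous _ 'M[R]_(m, n) _)).
Qed.

Lemma continuous_mx_norm_mul T m n p q
    (F : T -> 'M[R]_(m, n)) (G : T -> 'M[R]_(p, q)) k :
  continuous F -> continuous G -> continuous (fun t => k * `|F t| * `|G t|).
Proof.
move=> cF cG t; apply: (continuousM (s := fun t => k * `|F t|) (t := fun t => `|G t|)).
  apply: (continuousM (s := fun=> k) (t := fun t => `|F t|)); first exact: cst_continuous.
  exact: continuous_mx_norm.
exact: continuous_mx_norm.
Qed.

Lemma closed_eq_continuous T m n (F G : T -> 'M[R]_(m, n)) :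
  continuous F -> continuous G -> closed [set t | F t = G t].
Proof.
move=> cF cG; have -> : [set t | F t = G t] = (fun t => `|F t - G t|) @^-1` [set 0].
  apply/seteqP; split => t /= => [->|/eqP]; first by rewrite subrr normr0.
  by rewrite normr_eq0 subr_eq0 => /eqP.
apply: preimage_closed; last exact: closed_eq.
by move=> t _; apply: continuous_mx_norm => {}t; exact: continuousB (cF t) (cG t).
Qed.

Lemma closed_le_continuous T (f g : T -> R) :
  continuous f -> continuous g -> closed [set t | f t <= g t].
Proof.
move=> cf cg.
have -> : [set t | f t <= g t] = (fun t => g t - f t) @^-1` [set r | 0 <= r].
  by apply/seteqP; split => t /=; rewrite subr_ge0.
apply: preimage_closed; last exact: closed_ge.
by move=> t _; exact: continuousB (cg t) (cf t).
Qed.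

Lemma mx_bounded_closed_compact m n (K : set 'M[R]_(m, n)) :
  bounded_set K -> closed K -> compact K.
Proof.
move=> bK cK.
have cvec : continuous (@vec_mx R m n).
  by apply/continuous_mxP => i j; under eq_fun do rewrite mxE; exact: coord_continuous.
have -> : K = vec_mx @` (vec_mx @^-1` K).
  apply/seteqP; split=> [M KM|_ [r Kr <-] //].
  by exists (mxvec M); rewrite /= mxvecK.
apply: continuous_compact; first exact: continuous_subspaceT.
apply: bounded_closed_compact; last exact: preimage_closed.
case: bK => c [creal Kc]; exists c; split=> // d cd r Kr.
apply: le_trans (Kc d cd _ Kr).
apply: mx_norm_le_entries => [|i k]; first exact: normr_ge0.
rewrite (ord1 i); case/mxvec_indexP: k => a b.
by rewrite -{1}[r]vec_mxK mxvecE; exact: mx_entry_le_norm.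
Qed.

End MatrixTopology.

Section EuclideanNorm.
Variable R : realType.
Implicit Types (M : 'M[R]_2) (x v : 'cV[R]_2).

Lemma entry_le_eucl x i : `|x i 0| <= eucl x.
Proof.
rewrite -sqrtr_sqr ler_sqrt ?sumr_ge0 // => [|k _]; last exact: sqr_ge0.
by rewrite (bigD1 i) //= lerDl sumr_ge0 // => k _; exact: sqr_ge0.
Qed.

Lemma mx_norm_le_eucl x : `|x| <= eucl x.
Proof.
apply: mx_norm_le_entries => [|i j]; first exact: sqrtr_ge0.
by rewrite (ord1 j); exact: entry_le_eucl.
Qed.

Lemma eucl_le_mx_norm x : eucl x <= 2 * `|x|.
Proof.
rewrite -[leRHS]ger0_norm ?mulr_ge0 // -sqrtr_sqr ler_sqrt ?sqr_ge0 //.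
have xi i : x i 0 ^+ 2 <= `|x| ^+ 2.
  by rewrite -real_normK ?num_real // lerXn2r ?nnegrE ?mx_entry_le_norm.
apply: le_trans (ler_sum _ (fun i _ => xi i)) _.
rewrite sumr_const card_ord; have := normr_ge0 x; nra.
Qed.

Lemma eucl_delta (j : 'I_2) : eucl (delta_mx j 0 : 'cV[R]_2) = 1.
Proof.
rewrite /eucl (bigD1 j) //= big1 => [|i /negPf ij]; last by rewrite mxE ij expr0n.
by rewrite mxE !eqxx expr1n addr0 sqrtr1.
Qed.

Lemma eucl_mulmx_le M x : eucl x = 1 -> eucl (M *m x) <= 4 * `|M|.
Proof.
move=> x1; apply: le_trans (eucl_le_mx_norm _) _.
have := mx_norm_mulmx M x; have := mx_norm_le_eucl x; rewrite x1.
have := normr_ge0 M; have := normr_ge0 x; nra.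
Qed.

Lemma opnorm_ge M x : eucl x = 1 -> eucl (M *m x) <= opnorm M.
Proof.
move=> x1; apply: sup_upper_bound; last by exists x.
split; first by exists (eucl (M *m x)), x.
by exists (4 * `|M|) => _ [y /= y1 <-]; exact: eucl_mulmx_le.
Qed.

Lemma opnorm_le M : opnorm M <= 4 * `|M|.
Proof.
apply: ge_sup => [|_ [y /= y1 <-]]; last exact: eucl_mulmx_le.
by exists (eucl (M *m delta_mx 0 0)), (delta_mx 0 0); rewrite //= eucl_delta.
Qed.

Lemma mx_norm_le_opnorm M : `|M| <= opnorm M.
Proof.
have Mij i j : `|M i j| <= opnorm M.
  apply: le_trans (opnorm_ge M (eucl_delta j)).
  by apply: le_trans (entry_le_eucl _ i); rewrite -colE mxE.
by apply: mx_norm_le_entries => //; exact: le_trans (normr_ge0 _) (Mij 0 0).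
Qed.

Lemma trmx_mul_eucl v : v^T *m v = (eucl v ^+ 2)%:M.
Proof.
rewrite sqr_sqrtr ?sumr_ge0 // => [|i _]; last exact: sqr_ge0.
apply/matrixP => i j; rewrite !ord1 !mxE /=.
by apply: eq_bigr => k _; rewrite mxE expr2.
Qed.

Lemma eucl_eq1 v : eucl v = 1 <-> v^T *m v = 1.
Proof.
rewrite trmx_mul_eucl; split=> [->|/(congr1 (fun A : 'M[R]_1 => A 0 0))].
  by rewrite expr1n.
by rewrite !mxE /= mulr1n => /eqP; rewrite sqrp_eq1 ?sqrtr_ge0 // => /eqP.
Qed.

Lemma unit_vector_neq0 v : v^T *m v = 1 -> v != 0.
Proof. by apply: contra_eqN => /eqP ->; rewrite mulmx0 eq_sym oner_eq0. Qed.

End EuclideanNorm.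

Lemma eqmx_sub_rank (F : fieldType) m1 m2 n (A : 'M[F]_(m1, n)) (B : 'M[F]_(m2, n)) :
  (A <= B)%MS -> \rank A = \rank B -> (A == B)%MS.
Proof. by move=> sAB rAB; rewrite -(mxrank_leqif_eq sAB) rAB. Qed.

Section Lines.
Variable R : realType.
Implicit Types (M P : 'M[R]_2) (v x : 'cV[R]_2).

Definition mxspace k (S : 'M[R]_(k, 2)) : set 'cV[R]_2 := [set x | (x^T <= S)%MS].

Lemma mxspace_eq k1 k2 (S1 : 'M[R]_(k1, 2)) (S2 : 'M[R]_(k2, 2)) :
  mxspace S1 = mxspace S2 <-> (S1 == S2)%MS.
Proof.
split=> [eqS|/eqmxP eqS]; last by apply/seteqP; split=> x; rewrite /mxspace /= eqS.
have rowS k (S : 'M[R]_(k, 2)) i : mxspace S (row i S)^T.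
  by rewrite /mxspace /= trmxK row_sub.
apply/andP; split; apply/row_subP => i.
- by have := rowS _ S1 i; rewrite eqS /mxspace /= trmxK.
- by have := rowS _ S2 i; rewrite -eqS /mxspace /= trmxK.
Qed.

Lemma span1_mxspace v : span1 v = mxspace v^T.
Proof.
apply/seteqP; split=> [_ [c _ <-]|x /sub_rVP[c xc]].
- by rewrite /mxspace /= linearZ scalemx_sub.
- by exists c => //; apply: trmx_inj; rewrite linearZ.
Qed.

Lemma img_mxspace M : img M = mxspace M^T.
Proof.
apply/seteqP; split=> [_ [y _ <-]|x /submxP[D xD]].
- by rewrite /mxspace /= trmx_mul submxMl.
- by exists D^T => //; apply: trmx_inj; rewrite trmx_mul trmxK.
Qed.

Lemma kerm_mxspace M : kerm M = mxspace (kermx M^T).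
Proof.
apply/seteqP; split=> x; rewrite /kerm /mxspace /=; [move=> Mx|move/sub_kermxP].
- by apply/sub_kermxP; rewrite -trmx_mul Mx trmx0.
- by rewrite -trmx_mul -trmx0 => /trmx_inj.
Qed.

Lemma rank_trmx_cV v : v != 0 -> \rank v^T = 1%N.
Proof. by rewrite rank_rV trmx_eq0 => ->. Qed.

Lemma is_line_img M : \rank M = 1%N -> is_line (img M).
Proof.
move=> rM; have [i Mi] : exists i, row i M^T != 0.
  apply/existsP; have : M^T != 0 by rewrite -mxrank_eq0 mxrank_tr rM.
  apply: contraNT => /existsPn Mi; apply/eqP/row_matrixP => i.
  by rewrite row0; apply/eqP; rewrite -[_ == 0]negbK Mi.
exists (row i M^T)^T; first by rewrite trmx_eq0.
rewrite img_mxspace span1_mxspace trmxK; apply/mxspace_eq.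
by rewrite andbC; apply: eqmx_sub_rank (row_sub i _) _; rewrite rank_rV Mi mxrank_tr rM.
Qed.

Lemma outer_rank_img v (w : 'rV[R]_2) :
  v *m w != 0 -> \rank (v *m w) = 1%N /\ img (v *m w) = span1 v.
Proof.
move=> vw0; have v0 : v != 0 by apply: contraNneq vw0 => ->; rewrite mul0mx.
have rvw : \rank (v *m w) = 1%N.
  apply/eqP; rewrite eqn_leq lt0n mxrank_eq0 vw0 andbT.
  exact: leq_trans (mxrankM_maxl _ _) (rank_leq_col _).
split=> //; rewrite img_mxspace span1_mxspace; apply/mxspace_eq.
apply: eqmx_sub_rank; first by rewrite trmx_mul submxMl.
by rewrite mxrank_tr rvw rank_trmx_cV.
Qed.

Lemma img_span1_outer M v : v^T *m v = 1 -> img M = span1 v -> M = v *m (v^T *m M).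
Proof.
move=> vv; rewrite img_mxspace span1_mxspace => /mxspace_eq /andP[/submxP[D MD] _].
have -> : M = v *m D^T by apply: trmx_inj; rewrite trmx_mul trmxK.
by rewrite [v^T *m _]mulmxA vv mul1mx.
Qed.

Lemma kerm_span1 M v :
  M != 0 -> v != 0 -> M *m v = 0 -> \rank M = 1%N /\ kerm M = span1 v.
Proof.
move=> M0 v0 Mv; have vker : (v^T <= kermx M^T)%MS.
  by apply/sub_kermxP; rewrite -trmx_mul Mv trmx0.
have rM : \rank M = 1%N.
  have := mxrankS vker; rewrite rank_trmx_cV // mxrank_ker mxrank_tr.
  rewrite -mxrank_eq0 in M0; move: M0 (rank_leq_col M).
  by case: (\rank M) => [|[|[]]].
split=> //; rewrite kerm_mxspace span1_mxspace; apply/mxspace_eq.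
rewrite andbC; apply: eqmx_sub_rank vker _.
by rewrite rank_trmx_cV // mxrank_ker mxrank_tr rM.
Qed.

Lemma mapset_img M P : mapset M (img P) = img (M *m P).
Proof.
apply/seteqP; split=> [_ [_ [x _ <-] <-]|_ [x _ <-]]; first by exists x; rewrite ?mulmxA.
by exists (P *m x); [exists x | rewrite mulmxA].
Qed.

End Lines.

Section ScaledSemigroupClosure.
Variables (R : realType) (A : set 'M[R]_2).

Definition cone : set 'M[R]_2 := [set c *: M | c in [set: R] & M in semigroup_gen A].

Lemma cone_mul M N : cone M -> cone N -> cone (M *m N).
Proof.
move=> [c _ [M' sM' <-]] [d _ [N' sN' <-]]; exists (c * d) => //.
by exists (M' *m N'); [exact: sg_mul | rewrite -scalemxAl -scalemxAr scalerA].
Qed.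

Lemma cone_scale c M : cone M -> cone (c *: M).
Proof.
by move=> [d _ [M' sM' <-]]; exists (c * d) => //; exists M'; rewrite // scalerA.
Qed.

Lemma scrS_mul M N : scrS A M -> scrS A N -> scrS A (M *m N).
Proof.
apply: (@closure_rel _ cone (fun M N => closure cone (M *m N))) => [N'|M'|M' N' cM cN].
- apply: preimage_closed (@closed_closure _ _) => M' _.
  exact/continuous_mulmx/cst_continuous/continuous_id.
- apply: preimage_closed (@closed_closure _ _) => N' _.
  exact/continuous_mulmx/continuous_id/cst_continuous.
- exact/subset_closure/cone_mul.
Qed.

Lemma scrS_scale c M : scrS A M -> scrS A (c *: M).
Proof.
suff : closure cone `<=` *:%R c @^-1` closure cone by apply.
rewrite [X in X `<=` _]closureE; apply: smallest_sub => [|M' cM'].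
- by apply: preimage_closed (@closed_closure _ _) => M' _; exact: scaler_continuous.
- exact/subset_closure/cone_scale.
Qed.

Lemma scrS_mx_norm_mul : almost_multiplicative (semigroup_gen A) ->
  exists2 k : R, 0 < k &
    forall M N, scrS A M -> scrS A N -> k * `|M| * `|N| <= `|M *m N|.
Proof.
move=> [kap kap0 amA]; exists (kap / 4); first by rewrite divr_gt0.
have sgA M N : semigroup_gen A M -> semigroup_gen A N ->
    kap / 4 * `|M| * `|N| <= `|M *m N|.
  move=> sM sN; have := amA M N sM sN; have := opnorm_le (M *m N).
  have : kap * `|M| * `|N| <= kap * opnorm M * opnorm N.
    by rewrite -!mulrA ler_pM2l // ler_pM ?mx_norm_le_opnorm.
  lra.
have coneA M N : cone M -> cone N -> kap / 4 * `|M| * `|N| <= `|M *m N|.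
  move=> [c _ [M' sM' <-]] [d _ [N' sN' <-]].
  rewrite -scalemxAl -scalemxAr scalerA !normrZ.
  have := ler_wpM2l (mulr_ge0 (normr_ge0 c) (normr_ge0 d)) (sgA M' N' sM' sN').
  lra.
apply: closure_rel coneA => [N|M]; apply: closed_le_continuous.
- apply: (continuous_mx_norm_mul (G := fun=> N)); first exact: continuous_id.
  exact: cst_continuous.
- exact/continuous_mx_norm/continuous_mulmx/cst_continuous/continuous_id.
- apply: (continuous_mx_norm_mul (F := fun=> M)); first exact: cst_continuous.
  exact: continuous_id.
- exact/continuous_mx_norm/continuous_mulmx/continuous_id/cst_continuous.
Qed.

Lemma scrS_mulmx_neq0 M N : almost_multiplicative (semigroup_gen A) ->
  scrS A M -> scrS A N -> M != 0 -> N != 0 -> M *m N != 0.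
Proof.
move=> /scrS_mx_norm_mul[k k0 amS] SM SN M0 N0; rewrite -normr_gt0.
by apply: lt_le_trans (amS M N SM SN); rewrite !mulr_gt0 ?normr_gt0.
Qed.

End ScaledSemigroupClosure.

Section Compactness.
Variables (R : realType) (A : set 'M[R]_2).

Definition normalized_pairs (P : 'M[R]_2 -> 'cV[R]_2 -> Prop) :
    set ('M[R]_2 * 'cV[R]_2) :=
  [set p | [/\ scrS A p.1, `|p.1| = 1, p.2^T *m p.2 = 1 & P p.1 p.2]].

Lemma compact_normalized_pairs P :
  closed [set p | P p.1 p.2] -> compact (normalized_pairs P).
Proof.
move=> cP.
have -> : normalized_pairs P = ([set M | `|M| = 1] `*` [set v | v^T *m v = 1]) `&`
    (fst @^-1` scrS A `&` [set p | P p.1 p.2]).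
  by apply/seteqP; split=> -[M v]; [case|case=> -[/= ? ?] [/= ? ?]].
apply: compact_closedI; last first.
  apply: closedI => //; apply: preimage_closed (@closed_closure _ _) => p _.
  exact: continuous_fst.
apply: compact_setX; apply: mx_bounded_closed_compact.
- by exists 1; split=> // d d1 M /= ->; exact: ltW.
- by apply: preimage_closed (@closed_eq _ _) => M _; exact: norm_continuous.
- exists 1; split=> // d d1 v /= /eucl_eq1 v1.
  by apply: le_trans (ltW d1); rewrite -v1 mx_norm_le_eucl.
- apply: closed_eq_continuous => [|v]; last exact: cst_continuous.
  by apply: continuous_mulmx; [apply: continuous_trmx|]; exact: continuous_id.
Qed.

Lemma unit_Xu_snd : [set v | eucl v = 1 /\ Xu A (span1 v)] =
  snd @` normalized_pairs (fun M v => M = v *m (v^T *m M)).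
Proof.
apply/seteqP; split=> [v [/eucl_eq1 vv [P [SP rP] PV]]|_ [[M v] [SM M1 vv Mv] <-]].
- have P0 : P != 0 by rewrite -mxrank_eq0 rP.
  exists (`|P|^-1 *: P, v) => //; split=> //=; first exact: scrS_scale.
    exact: normfZV.
  by rewrite -!scalemxAr -(img_span1_outer vv PV).
- split; first exact/eucl_eq1.
  have vw0 : v *m (v^T *m M) != 0 by rewrite -Mv -normr_eq0 M1 oner_neq0.
  have [rM imgM] := outer_rank_img vw0.
  by rewrite -Mv in rM imgM; exists M.
Qed.

Lemma unit_Xs_snd : [set v | eucl v = 1 /\ Xs A (span1 v)] =
  snd @` normalized_pairs (fun M v => M *m v = 0).
Proof.
apply/seteqP; split=> [v [/eucl_eq1 vv [P [SP rP] PV]]|_ [[M v] [SM M1 vv Mv] <-]].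
- have P0 : P != 0 by rewrite -mxrank_eq0 rP.
  have Pv : P *m v = 0 by have : kerm P v by rewrite PV; exists 1; rewrite ?scale1r.
  exists (`|P|^-1 *: P, v) => //; split=> //=; first exact: scrS_scale.
    exact: normfZV.
  by rewrite -scalemxAl Pv scaler0.
- split; first exact/eucl_eq1.
  have M0 : M != 0 by rewrite -normr_eq0 M1 oner_neq0.
  by have [rM kerM] := kerm_span1 M0 (unit_vector_neq0 vv) Mv; exists M.
Qed.

Lemma RP1_compact_Xu : RP1_compact (Xu A).
Proof.
rewrite /RP1_compact unit_Xu_snd; apply: continuous_compact.
  exact/continuous_subspaceT/continuous_snd.
apply/compact_normalized_pairs/closed_eq_continuous; first exact: continuous_fst.
apply: continuous_mulmx; first exact: continuous_snd.
apply: continuous_mulmx; last exact: continuous_fst.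
exact/continuous_trmx/continuous_snd.
Qed.

Lemma RP1_compact_Xs : RP1_compact (Xs A).
Proof.
rewrite /RP1_compact unit_Xs_snd; apply: continuous_compact.
  exact/continuous_subspaceT/continuous_snd.
apply/compact_normalized_pairs/closed_eq_continuous; last exact: cst_continuous.
by apply: continuous_mulmx; [exact: continuous_fst | exact: continuous_snd].
Qed.

End Compactness.

Section AlmostMultiplicative.
Variables (R : realType) (A : set 'M[R]_2).
Hypothesis amA : almost_multiplicative (semigroup_gen A).
Implicit Types (M P : 'M[R]_2) (V : set 'cV[R]_2).

Lemma scrR_neq0 M : scrR A M -> M != 0.
Proof. by case=> _ rM; rewrite -mxrank_eq0 rM. Qed.

Lemma Xu_Xs_disjoint : Xu A `&` Xs A = set0.
Proof.
apply/seteqP; split=> // _ [[M RM <-] [N RN /esym]].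
rewrite img_mxspace kerm_mxspace => /mxspace_eq /andP[/sub_kermxP MN _].
have NM : N *m M = 0 by apply: trmx_inj; rewrite trmx_mul MN trmx0.
by move: (scrS_mulmx_neq0 amA RN.1 RM.1 (scrR_neq0 RN) (scrR_neq0 RM)); rewrite NM eqxx.
Qed.

Lemma Xu_mapset M V : scrS A M -> M != 0 -> Xu A V ->
  is_line (mapset M V) /\ Xu A (mapset M V).
Proof.
move=> SM M0 [P [SP rP] <-]; rewrite mapset_img.
have MP0 := scrS_mulmx_neq0 amA SM SP M0 (scrR_neq0 (conj SP rP)).
have rMP : \rank (M *m P) = 1%N.
  apply/eqP; rewrite eqn_leq lt0n mxrank_eq0 MP0 andbT.
  by apply: leq_trans (mxrankM_maxr M P) _; rewrite rP.
split; first exact: is_line_img.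
by exists (M *m P) => //; split=> //; exact: scrS_mul.
Qed.

End AlmostMultiplicative.

Theorem lemma3p3 (R : realType) (A : set 'M[R]_2)
  (hGL : forall M, A M -> M \in unitmx)
  (hR : scrR A !=set0)
  (hAM : almost_multiplicative (semigroup_gen A)) :
  [/\ Xu A !=set0 /\ Xs A !=set0, RP1_compact (Xu A), RP1_compact (Xs A),
      Xu A `&` Xs A = set0 &
      forall M, scrS A M -> M != 0 ->
        forall V, Xu A V -> is_line (mapset M V) /\ Xu A (mapset M V)].
Proof.
split; [|exact: RP1_compact_Xu|exact: RP1_compact_Xs|exact: Xu_Xs_disjoint|].
- by case: hR => M RM; split; [exists (img M)|exists (kerm M)]; exists M.
- by move=> M SM M0 V; exact: Xu_mapset.
Qed.
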